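(* Let $w$ be well-ordering on an interval $I$, $n\in\mathbb N$, and $A\subset\{1,\dots,2n\}$ with $|A|=n$ and $\max f_A\ge1$. Let $\ell_1<\dots<\ell_m$ be the integers $k\in\{1,\dots,2n\}$ with $f_A(k)=\max f_A$ (so $\ell_m<2n$), and set $B(A)=\big(A\cup\{\ell_j+1\}_{j=1}^m\big)\setminus\{\ell_j\}_{j=1}^m$. If $\mathrm{Osc}(f_A)\ge2$, then $\mathrm{Osc}(f_{B(A)})<\mathrm{Osc}(f_A)$. Moreover, for all $x_1\le x_2\le\dots\le x_{2n}$ in $I$, $c_n(x_{B(A)})+c_n(x_{B(A)^c})\le c_n(x_A)+c_n(x_{A^c}),$ and if $w$ is strictly well-ordering and $c_n(x_{B(A)})+c_n(x_{B(A)^c})<\infty$, equality holds if and only if $\sum_{k\in A}\delta_{x_k}=\sum_{k\in B(A)}\delta_{x_k}$ or $\sum_{k\in A}\delta_{x_k}=\sum_{k\in B(A)^c}\delta_{x_k}$.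
   Context: For $A\subset\{1,\dots,2n\}$ with $|A|=n$: $A^c=\{1,\dots,2n\}\setminus A$, $\mu_A=\sum_{j\in A}\delta_j-\sum_{j\in A^c}\delta_j$, $f_A(t)=\mu_A([0,t])$ for $t\in\mathbb R$ (the cumulative function; integer-valued, vanishes for $t<1$ and $t\ge2n$), and $\mathrm{Osc}(f_A)=\max f_A-\min f_A$. $c_n(y)=\sum_{i\ne j}w(y_i,y_j)$; $x_B=(x_{b})_{b\in B}$ in increasing order of indices. Well-ordering: $w$ continuous symmetric with, for $y_1\le y_2\le y_3\le y_4$ in $I$, $w(y_1,y_3)+w(y_2,y_4)=\min_\sigma[w(y_{\sigma(1)},y_{\sigma(2)})+w(y_{\sigma(3)},y_{\sigma(4)})]$ over permutations of $\{1,2,3,4\}$; strictly well-ordering: equality for a given $\sigma$ only if the sum is $\infty$ or $\delta_{y_1}+\delta_{y_3}\in\{\delta_{y_{\sigma(1)}}+\delta_{y_{\sigma(2)}},\delta_{y_{\sigma(3)}}+\delta_{y_{\sigma(4)}}\}$. *)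

From HB Require Import structures.
From mathcomp Require Import all_boot all_order all_algebra all_fingroup.
From mathcomp Require Import all_classical all_reals all_analysis.
Set Implicit Arguments. Unset Strict Implicit. Unset Printing Implicit Defensive.
Import Order.TTheory GRing.Theory Num.Theory numFieldNormedType.Exports.
Local Open Scope classical_set_scope.
Local Open Scope ring_scope.

Section Defs.
Context {R : realType}.

Definition w_continuous (I : interval R) (w : R -> R -> \bar R) :=
  {within [set p : R * R | p.1 \in I /\ p.2 \in I],
     continuous (fun p : R * R => w p.1 p.2)}.

Definition w_symmetric (I : interval R) (w : R -> R -> \bar R) :=
  forall x y, x \in I -> y \in I -> w x y = w y x.

Definition tup4 (y1 y2 y3 y4 : R) : 4.-tuple R := [tuple y1; y2; y3; y4].

Definition pair_cost (w : R -> R -> \bar R) (y : 4.-tuple R) (s : 'S_4) : \bar R :=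
  (w (tnth y (s (inord 0))) (tnth y (s (inord 1))) +
   w (tnth y (s (inord 2))) (tnth y (s (inord 3))))%E.

Definition well_ordering (I : interval R) (w : R -> R -> \bar R) :=
  [/\ w_continuous I w, w_symmetric I w &
   forall y1 y2 y3 y4 : R, y1 \in I -> y2 \in I -> y3 \in I -> y4 \in I ->
     y1 <= y2 -> y2 <= y3 -> y3 <= y4 ->
     (w y1 y3 + w y2 y4)%E =
       \big[mine/+oo%E]_(s : 'S_4) pair_cost w (tup4 y1 y2 y3 y4) s].

(* finite sum of Dirac masses sum_{t in s} delta_t, represented by its
   point-mass (counting) function *)
Definition diracs (s : seq R) : R -> nat := fun t => count_mem t s.

Definition strictly_well_ordering (I : interval R) (w : R -> R -> \bar R) :=
  well_ordering I w /\
  forall y1 y2 y3 y4 : R, y1 \in I -> y2 \in I -> y3 \in I -> y4 \in I ->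
    y1 <= y2 -> y2 <= y3 -> y3 <= y4 ->
    forall s : 'S_4,
      let y := tup4 y1 y2 y3 y4 in
      (w y1 y3 + w y2 y4)%E = pair_cost w y s ->
      (w y1 y3 + w y2 y4)%E = +oo%E \/
      diracs [:: y1; y3] = diracs [:: tnth y (s (inord 0)); tnth y (s (inord 1))] \/
      diracs [:: y1; y3] = diracs [:: tnth y (s (inord 2)); tnth y (s (inord 3))].

Definition cost (w : R -> R -> \bar R) (y : seq R) : \bar R :=
  (\sum_(i < size y) \sum_(j < size y | i != j) w (nth 0%R y i) (nth 0%R y j))%E.

(* Index convention: the point j+1 of {1,..,2n} is represented by j : 'I_(2*n). *)

Definition fA (n : nat) (A : {set 'I_(2 * n)}) (t : R) : R :=
  \sum_(j < 2 * n | (j.+1)%:R <= t) (if j \in A then 1 else -1).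

Definition fmax (f : R -> R) : R := sup (range f).
Definition fmin (f : R -> R) : R := inf (range f).
Definition Osc (f : R -> R) : R := fmax f - fmin f.

Definition Lset (n : nat) (A : {set 'I_(2 * n)}) : {set 'I_(2 * n)} :=
  [set j : 'I_(2 * n) | fA A (j.+1)%:R == fmax (fA A)].

(* the points l+1 (l in {1,..,2n}, f_A(l) = max f_A), as indices:
   index j represents j+1 = l+1, i.e. l = j *)
Definition Lset_succ (n : nat) (A : {set 'I_(2 * n)}) : {set 'I_(2 * n)} :=
  [set j : 'I_(2 * n) | (0 < j)%N && (fA A (j%:R) == fmax (fA A))].

Definition BA (n : nat) (A : {set 'I_(2 * n)}) : {set 'I_(2 * n)} :=
  (A :|: Lset_succ A) :\: Lset A.

Definition xsub (n : nat) (x : 'I_(2 * n) -> R) (B : {set 'I_(2 * n)}) : seq R :=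
  [seq x i | i <- enum B].

End Defs.

From HB Require Import structures.
From mathcomp Require Import all_boot all_order all_algebra all_fingroup.
From mathcomp Require Import all_classical all_reals all_analysis.
From mathcomp Require Import zify lra.
Import Order.TTheory GRing.Theory Num.Theory numFieldNormedType.Exports.
Local Open Scope ring_scope.
Set Implicit Arguments. Unset Strict Implicit.

(* Read f_A as a walk of 2n steps +-1 from 0 to 0, with maximum M >= 1.  B(A) swaps
   every up-step reaching M with the down-step that follows it, so the walk of B(A) is
   the walk of A lowered by 2 exactly where it equals M: the maximum drops and, when
   Osc f_A >= 2, the minimum does not.
   Let L be the set of peaks and R0, R1 the off-peak points in and out of A.  Then A is
   R0 with L and A^c is R1 with L+1, while B(A) is R0 with L+1 and B(A)^c is R1 with L,
   so only the pairs {peak point, off-peak point} change sides: for each peak l, A joins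
   the off-peak points of A to l and the others to l+1, and B(A) does the reverse.  Read
   cyclically from l+2, the off-peak indices form a Dyck word whose closing letters are
   those in A, because the walk restricted to them is maximal at l (cycle lemma).
   Matching each closing letter with an earlier opening one, the four-point inequality
   of well-ordering shows that every matched pair costs no more in B(A); its strict form
   gives the equality case. *)

Section ExtendedRealSums.
Variable R : realType.
Local Open Scope ereal_scope.

Lemma leeD_eq (x1 x2 y1 y2 : \bar R) : x1 <= y1 -> x2 <= y2 ->
  x1 + x2 = y1 + y2 -> x1 + x2 \is a fin_num -> x1 = y1 /\ x2 = y2.
Proof.
move=> le1 le2 e fx; have fy : y1 + y2 \is a fin_num by rewrite -e.
move: fx fy le1 le2 e; rewrite !fin_numD => /andP[f1 f2] /andP[g1 g2].
rewrite -(fineK f1) -(fineK f2) -(fineK g1) -(fineK g2) !lee_fin => le1 le2 [e].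
by split; congr (_%:E); lra.
Qed.

Lemma lee_sum_eq (I : eqType) (s : seq I) (P : pred I) (f g : I -> \bar R) :
  (forall i, P i -> f i <= g i) ->
  \sum_(i <- s | P i) f i = \sum_(i <- s | P i) g i ->
  \sum_(i <- s | P i) f i \is a fin_num ->
  forall i, i \in s -> P i -> f i = g i.
Proof.
move=> fg; elim: s => // y s IH; rewrite !big_cons.
case: ifP => [Py|nPy] e fin i; last by rewrite inE => /predU1P[->|]; [rewrite nPy | apply: IH].
have [ey es] := leeD_eq (fg y Py) (lee_sum _ fg) e fin.
move: fin; rewrite fin_numD => /andP[_ fin].
by rewrite inE => /predU1P[-> //|]; exact: (IH es fin).
Qed.

End ExtendedRealSums.

Lemma big_setU_disjoint (V : Type) (idx : V) (op : Monoid.com_law idx) (T : finType)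
    (X Y : {set T}) (P : pred T) (F : T -> V) : [disjoint X & Y] ->
  \big[op/idx]_(i in X :|: Y | P i) F i =
    op (\big[op/idx]_(i in X | P i) F i) (\big[op/idx]_(i in Y | P i) F i).
Proof.
move=> dXY; rewrite (bigID [in X]); congr (op _ _); apply: eq_bigl => i;
  rewrite finset.in_setU; case: (boolP (i \in X)) => [iX | _] /=; rewrite ?andbT ?andbF //.
by rewrite (disjointFr dXY iX).
Qed.

Lemma take_filter_exists (T : Type) (p : pred T) (s : seq T) (m : nat) :
  exists k, take m [seq x <- s | p x] = [seq x <- take k s | p x].
Proof.
elim: s m => [|y s IH] m; first by exists 0%N.
case: m => [|m]; first by exists 0%N; rewrite take0.
rewrite /=; case: ifP => py.
  by have [k ek] := IH m; exists k.+1; rewrite /= py ek.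
by have [k ek] := IH m.+1; exists k.+1; rewrite /= py ek.
Qed.

Lemma subseq2_cat (T : eqType) (i j : T) (s1 s2 : seq T) :
  subseq [:: i; j] (s1 ++ s2) ->
  [\/ subseq [:: i; j] s1, subseq [:: i; j] s2 | i \in s1 /\ j \in s2].
Proof.
elim: s1 => [|y s1 IH] /=; first by move=> ?; apply: Or32.
case: eqP => [-> | ne].
  rewrite sub1seq mem_cat => /orP[js1 | js2]; last by apply: Or33; rewrite mem_head.
  by apply: Or31; rewrite sub1seq.
move=> /IH[h | h | [is1 js2]]; [exact: Or31 | exact: Or32 | apply: Or33].
by rewrite inE is1 orbT.
Qed.

(** * Dyck words *)

Section DyckWords.
Variables (T : eqType) (sg : pred T).

Definition excess (s : seq T) : int := \sum_(k <- s) (if sg k then 1 else -1).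

Lemma excess_cat s1 s2 : excess (s1 ++ s2) = excess s1 + excess s2.
Proof. exact: big_cat. Qed.

Lemma excess_cons k s : excess (k :: s) = (if sg k then 1 else -1) + excess s.
Proof. exact: big_cons. Qed.

Lemma excess_all_open s : ~~ has sg s -> excess s = - (size s)%:Z.
Proof.
elim: s => [|k s IH] /=; first by rewrite /excess big_nil.
by rewrite negb_or excess_cons => /andP[/negbTE -> /IH ->]; lia.
Qed.

Definition dyck_word (s : seq T) := (forall m, excess (take m s) <= 0) /\ excess s = 0.

Lemma dyck_word_head k s : dyck_word (k :: s) -> ~~ sg k.
Proof. by case=> /(_ 1%N); rewrite /= take0 excess_cons /excess big_nil; case: (sg k). Qed.

Lemma dyck_word_has s : dyck_word s -> s != [::] -> has sg s.
Proof.
case=> _ e; apply: contraNT => /excess_all_open; rewrite e -size_eq0.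
by case: (size s).
Qed.

Lemma split_open_close i s : ~~ sg i -> has sg s ->
  exists s1 s2 i' j, [/\ i :: s = s1 ++ i' :: j :: s2, ~~ sg i' & sg j].
Proof.
elim: s i => [|y s IH] i //= ni; case sy: (sg y) => /= hs.
  by exists [::], s, i, y.
have [s1 [s2 [i' [j [-> ni' sj]]]]] := IH y (negbT sy) hs.
by exists (i :: s1), s2, i', j.
Qed.

Lemma dyck_word_rem s1 s2 i j : ~~ sg i -> sg j ->
  dyck_word (s1 ++ i :: j :: s2) -> dyck_word (s1 ++ s2).
Proof.
move=> ni sj [pre tot]; have eij t : excess (i :: j :: t) = excess t.
  by rewrite !excess_cons sj (negbTE ni) addrA addNr add0r.
split; last by move: tot; rewrite !excess_cat eij.
move=> m; case: (leqP m (size s1)) => hm.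
  by rewrite takel_cat // -(takel_cat (i :: j :: s2) hm).
have := pre m.+2; rewrite !take_cat !ltnNge (ltnW hm) (leqW (leqW (ltnW hm))) /=.
have -> : (m.+2 - size s1 = (m - size s1).+2)%N by lia.
by rewrite !excess_cat eij.
Qed.

Lemma dyck_matching s : dyck_word s ->
  exists2 p : seq (T * T), perm_eq s (flatten [seq [:: q.1; q.2] | q <- p]) &
    {in p, forall q, [/\ subseq [:: q.1; q.2] s, ~~ sg q.1 & sg q.2]}.
Proof.
have [N] := ubnP (size s); elim: N s => // N IH s.
case: s => [_ _ | k s]; first by exists [::].
rewrite ltnS => hN ds.
have nk := dyck_word_head ds.
have hs : has sg s by move: (dyck_word_has ds isT); rewrite /= (negbTE nk).
have [s1 [s2 [i [j [e ni sj]]]]] := split_open_close nk hs.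
rewrite e in ds hN *.
have hsz : (size (s1 ++ s2) < N)%N by move: hN; rewrite !size_cat /= !addnS; lia.
have [p pe hp] := IH _ hsz (dyck_word_rem ni sj ds).
exists ((i, j) :: p).
  by rewrite (perm_catCA s1 [:: i; j] s2) /= !perm_cons.
move=> q; rewrite inE => /predU1P[-> | /hp[sq nq1 sq2]]; split=> //=.
  exact: cat_subseq (sub0seq s1) (prefix_subseq [:: i; j] s2).
apply: subseq_trans sq _; apply: cat_subseq (subseq_refl _) (suffix_subseq [:: i; j] _).
Qed.

Lemma dyck_word_rot s1 s2 : excess (s1 ++ s2) = 0 ->
  (forall m, excess (take m (s1 ++ s2)) <= excess s1) -> dyck_word (s2 ++ s1).
Proof.
move=> tot top; split=> [m|]; last by rewrite excess_cat addrC -excess_cat.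
rewrite take_cat; case: ltnP => hm.
  have := top (size s1 + m); rewrite take_cat ltnNge leq_addr /= addKn excess_cat.
  by rewrite gerDl.
have top1 : excess (take (m - size s2) s1) <= excess s1.
  case: (leqP (m - size s2) (size s1)) => h; first by rewrite -(takel_cat s2 h).
  by rewrite take_oversize // ltnW.
by move: tot top1; rewrite !excess_cat; lia.
Qed.

End DyckWords.

Section DyckSums.
Variables (R : realType) (T : eqType) (sg : pred T) (a b : T -> \bar R) (s : seq T).
Local Open Scope ereal_scope.
Hypothesis dyck_s : dyck_word sg s.
Hypothesis pair_le : forall i j, subseq [:: i; j] s -> ~~ sg i -> sg j ->
  b i + b j <= a i + a j.

Lemma sum_flatten_pairs (f : T -> \bar R) (p : seq (T * T)) :
  \sum_(k <- flatten [seq [:: q.1; q.2] | q <- p]) f k = \sum_(q <- p) (f q.1 + f q.2).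
Proof. by rewrite big_flatten big_map; apply: eq_bigr => q _; rewrite big_cons big_seq1. Qed.

Lemma dyck_sum_le : \sum_(k <- s) b k <= \sum_(k <- s) a k.
Proof.
have [p sp hp] := dyck_matching dyck_s.
rewrite !(perm_big _ sp) !sum_flatten_pairs big_seq [X in _ <= X]big_seq.
by apply: lee_sum => q /hp[]; apply: pair_le.
Qed.

Lemma dyck_sum_eq (U : eqType) (val : T -> U) :
  (forall i j, subseq [:: i; j] s -> ~~ sg i -> sg j ->
     b i + b j = a i + a j -> b i + b j \is a fin_num -> val i = val j) ->
  \sum_(k <- s) b k = \sum_(k <- s) a k -> \sum_(k <- s) b k \is a fin_num ->
  perm_eq [seq val k | k <- s & ~~ sg k] [seq val k | k <- s & sg k].
Proof.
move=> pair_eq; have [p sp hp] := dyck_matching dyck_s.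
rewrite !(perm_big _ sp) !sum_flatten_pairs big_seq [X in _ = X]big_seq => e fin.
have le_pairs q : q \in p -> b q.1 + b q.2 <= a q.1 + a q.2 by move=> /hp[]; apply: pair_le.
have val_eq q : q \in p -> val q.1 = val q.2.
  move=> qp; have [sq nq1 sq2] := hp q qp; apply: pair_eq => //.
    exact: (lee_sum_eq le_pairs e fin qp qp).
  by move/sum_fin_numP : fin; apply.
rewrite (permPl (perm_map val (perm_filter (fun k => ~~ sg k) sp))).
rewrite (permPr (perm_map val (perm_filter sg sp))).
suff [-> ->] : [seq k <- flatten [seq [:: q.1; q.2] | q <- p] | ~~ sg k] = unzip1 p /\
               [seq k <- flatten [seq [:: q.1; q.2] | q <- p] | sg k] = unzip2 p.
  by rewrite -!map_comp (@eq_in_map _ _ (val \o fst) (val \o snd) p).1 //; exact: val_eq.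
elim: p hp {sp e fin le_pairs val_eq} => //= q p IH hp.
have [_ /negbTE -> ->] := hp q (mem_head _ _).
by have [q' qp'|-> ->] // := IH; apply: (hp q'); rewrite inE qp' orbT.
Qed.

End DyckSums.

(** * Four points under a well-ordering cost *)

Lemma perm_eq2 (T : eqType) (a b c d : T) :
  perm_eq [:: a; b] [:: c; d] -> (a = c /\ b = d) \/ (a = d /\ b = c).
Proof.
move=> pe; have := perm_mem pe a; rewrite !inE eqxx => /esym/orP[/eqP ac | /eqP ad].
  by left; move: pe; rewrite ac perm_cons => /perm_mem/(_ b); rewrite !inE eqxx => /esym/eqP.
right; move: pe; rewrite ad perm_sym (perm_catC [:: c] [:: d]) perm_cons.
by move=> /perm_mem/(_ c); rewrite !inE eqxx => /esym/eqP.
Qed.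

Lemma diracs_eq (R : realType) (s t : seq R) : diracs s = diracs t <-> perm_eq s t.
Proof.
split=> [e | /seq.permP e]; last by apply/funext => y; apply: e.
by apply/allP => y _; rewrite /= -/(diracs s y) e.
Qed.

Local Notation tperm13 := (tperm (inord 1) (inord 3) : 'S_4).

Section FourPoints.
Variables (R : realType) (I : interval R) (w : R -> R -> \bar R) (y1 y2 y3 y4 : R).
Hypotheses (y1I : y1 \in I) (y2I : y2 \in I) (y3I : y3 \in I) (y4I : y4 \in I)
  (le12 : y1 <= y2) (le23 : y2 <= y3) (le34 : y3 <= y4).
Local Notation y := (tup4 y1 y2 y3 y4).
Local Open Scope ereal_scope.

Lemma pair_cost1 : pair_cost w y 1%g = w y1 y2 + w y3 y4.
Proof. by rewrite /pair_cost !perm1 !(tnth_nth y1) /= !inordK. Qed.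

Lemma pair_cost_tperm13 : pair_cost w y tperm13 = w y1 y4 + w y3 y2.
Proof.
by rewrite /pair_cost !permE /= -!val_eqE /= !inordK // !(tnth_nth y1) /= !inordK.
Qed.

Lemma well_ordering_le (s : 'S_4) : well_ordering I w ->
  w y1 y3 + w y2 y4 <= pair_cost w y s.
Proof.
case=> _ _ min_cost; rewrite (min_cost _ _ _ _ y1I y2I y3I y4I le12 le23 le34).
by rewrite (bigD1 s) //= ge_min lexx.
Qed.

Lemma strictly_well_ordering_eq (s : 'S_4) : strictly_well_ordering I w ->
  w y1 y3 + w y2 y4 = pair_cost w y s -> w y1 y3 + w y2 y4 != +oo ->
  perm_eq [:: y1; y3] [:: tnth y (s (inord 0)); tnth y (s (inord 1))] \/
  perm_eq [:: y1; y3] [:: tnth y (s (inord 2)); tnth y (s (inord 3))].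
Proof.
case=> _ strict e fin.
have [/eqP|[]] := strict _ _ _ _ y1I y2I y3I y4I le12 le23 le34 s e.
- by rewrite (negbTE fin).
- by move/diracs_eq; left.
- by move/diracs_eq; right.
Qed.

Lemma strictly_well_ordering_eq1 : strictly_well_ordering I w ->
  w y1 y3 + w y2 y4 = w y1 y2 + w y3 y4 -> w y1 y3 + w y2 y4 != +oo -> y2 = y3.
Proof.
move=> hsw; rewrite -pair_cost1 => e /(strictly_well_ordering_eq hsw e).
rewrite !perm1 !(tnth_nth y1) /= !inordK //=.
case=> /perm_eq2[[e1 e2] | [e1 e2]]; apply/le_anti; rewrite le23 /=.
- by rewrite e2.
- by rewrite e2 e1.
- by rewrite -e1.
- by rewrite (le_trans le34) // -e1.
Qed.

Lemma strictly_well_ordering_eq_tperm13 : strictly_well_ordering I w ->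
  w y1 y3 + w y2 y4 = w y1 y4 + w y3 y2 -> w y1 y3 + w y2 y4 != +oo ->
  y1 = y2 \/ y3 = y4.
Proof.
move=> hsw; rewrite -pair_cost_tperm13 => e /(strictly_well_ordering_eq hsw e).
rewrite !permE /= -!val_eqE /= !inordK // !(tnth_nth y1) /= !inordK //=.
case=> /perm_eq2[[e1 e2] | [e1 e2]].
- by right.
- by right; rewrite e2 e1.
- by left; rewrite e1 e2.
- by left.
Qed.

End FourPoints.

Section Exchange.
Variables (R : realType) (I : interval R) (w : R -> R -> \bar R) (y z p q : R).
Hypotheses (yI : y \in I) (zI : z \in I) (pI : p \in I) (qI : q \in I) (le_yz : y <= z)
  (separated : [\/ p <= q <= y, z <= p <= q | (q <= y) && (z <= p)]).
Local Open Scope ereal_scope.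

Lemma exchange_le : well_ordering I w -> w y p + w z q <= w z p + w y q.
Proof.
move=> hw; have [_ sym _] := hw.
case: separated => [/andP[pq qy] | /andP[zp pq] | /andP[qy zp]].
- have := well_ordering_le pI qI yI zI pq qy le_yz tperm13 hw.
  by rewrite pair_cost_tperm13 !(sym y) // !(sym z).
- have := well_ordering_le yI zI pI qI le_yz zp pq tperm13 hw.
  by rewrite pair_cost_tperm13 (sym p) // [X in _ <= X]addeC.
- have := well_ordering_le qI yI zI pI qy le_yz zp 1%g hw.
  by rewrite pair_cost1 (sym q) // (sym q) // addeC [X in _ <= X]addeC.
Qed.

Lemma exchange_eq : strictly_well_ordering I w ->
  w y p + w z q = w z p + w y q -> w y p + w z q != +oo -> p = q \/ y = z.
Proof.
move=> hsw; have [[_ sym _] _] := hsw.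
case: separated => [/andP[pq qy] | /andP[zp pq] | /andP[qy zp]] e fin.
- move: e fin; rewrite (sym y p) // (sym z q) // (sym z p) //.
  exact: (strictly_well_ordering_eq_tperm13 pI qI yI zI pq qy le_yz hsw).
- move: e; rewrite (sym z p) // [X in _ = X]addeC => e.
  by have [|] := strictly_well_ordering_eq_tperm13 yI zI pI qI le_yz zp pq hsw e fin;
    [right | left].
- move: e fin; rewrite (sym z q) // (sym y q) // addeC [X in _ = X]addeC => e fin.
  by right; apply: (strictly_well_ordering_eq1 qI yI zI pI qy le_yz zp hsw e fin).
Qed.

End Exchange.

(** * The walk f_A *)

Section EnumOrd.
Variable N : nat.
Local Open Scope nat_scope.
Implicit Types (i j : 'I_N) (k : nat).

Lemma take_enum_ord k : take k (enum 'I_N) = [seq j : 'I_N <- enum 'I_N | j < k].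
Proof.
apply: (inj_map val_inj); rewrite map_take -(filter_map val (fun m => m < k)).
rewrite val_enum_ord take_iota -(filter_iota_ltn 0 (geq_minr k N)); apply: eq_in_filter => i.
by rewrite mem_iota leq_min => /andP[_ ->]; rewrite andbT.
Qed.

Lemma mem_take_enum_ord k i : (i \in take k (enum 'I_N)) = (i < k).
Proof. by rewrite take_enum_ord mem_filter mem_enum andbT. Qed.

Lemma mem_drop_enum_ord k i : (i \in drop k (enum 'I_N)) = (k <= i).
Proof.
have u : uniq (take k (enum 'I_N) ++ drop k (enum 'I_N)) by rewrite cat_take_drop enum_uniq.
have m : i \in take k (enum 'I_N) ++ drop k (enum 'I_N) by rewrite cat_take_drop mem_enum.
move: u m; rewrite cat_uniq mem_cat mem_take_enum_ord => /and3P[_ /hasPn td _].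
case: (ltnP i k) => [ik _ | _ //=].
by apply/negbTE/negP => /td; rewrite /= mem_take_enum_ord ik.
Qed.

Lemma subseq_enum_ord i j : subseq [:: i; j] (enum 'I_N) -> i < j.
Proof.
move=> /subseq_sorted-/(_ (relpre val ltn) (fun _ _ _ => @ltn_trans _ _ _)).
by rewrite -sorted_map val_enum_ord iota_ltn_sorted /= andbT => /(_ isT).
Qed.

Lemma sum_take_enum_ord (V : nmodType) k (P : pred 'I_N) (F : 'I_N -> V) :
  (\sum_(j <- take k (enum 'I_N) | P j) F j = \sum_(j < N | (j < k)%N && P j) F j)%R.
Proof. by rewrite take_enum_ord big_filter_cond big_enum_cond. Qed.

End EnumOrd.

Section Walk.
Variables (R : realType) (n : nat).
Local Notation N := (2 * n)%N.
Implicit Types (X : {set 'I_N}) (k : nat).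

Definition step X (j : 'I_N) : int := if j \in X then 1 else -1.

Definition walk X k : int := \sum_(j < N | (j < k)%N) step X j.

Lemma fA_walk X t : fA (R:=R) X t = (walk X (Num.truncn t))%:~R.
Proof.
rewrite /fA /walk rmorph_sum; apply: eq_big => j; first by rewrite truncn_gt_nat.
by rewrite /step; case: (j \in X).
Qed.

Lemma fA_walk_nat X k : fA (R:=R) X k%:R = (walk X k)%:~R.
Proof.
rewrite /fA /walk rmorph_sum; apply: eq_big => j; first by rewrite ler_nat.
by rewrite /step; case: (j \in X).
Qed.

Lemma walk0 X : walk X 0 = 0.
Proof. by rewrite /walk big_pred0. Qed.

Lemma walkS X (j : 'I_N) : walk X j.+1 = walk X j + step X j.
Proof.
rewrite /walk (bigD1 j) ?ltnSn //= addrC; congr (_ + _); apply: eq_bigl => i.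
by rewrite ltnS ltn_neqAle -val_eqE andbC.
Qed.

Lemma walk_ge X k : (N <= k)%N -> walk X k = walk X N.
Proof. by move=> h; apply: eq_bigl => i; rewrite ltn_ord (leq_trans (ltn_ord i) h). Qed.

Lemma walk_end X : #|X| = n -> walk X N = 0.
Proof.
move=> hX; rewrite /walk (bigID [in X]) /=.
rewrite (eq_bigr (fun _ => 1)); last by move=> i /andP[_]; rewrite /step => ->.
rewrite [X in _ + X](eq_bigr (fun _ => -1)); last by move=> i /andP[_ /negbTE]; rewrite /step => ->.
rewrite !sumr_const mulNrn.
have -> : #|[pred j : 'I_N | (j < N)%N && (j \in X)]| = n.
  by apply: etrans hX; apply: eq_card => j; rewrite inE ltn_ord.
have -> : #|[pred j : 'I_N | (j < N)%N && (j \notin X)]| = n.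
  have := cardsC X; rewrite card_ord hX => hC; have {hC} hC : #|~: X| = n by lia.
  by apply: etrans hC; apply: eq_card => j; rewrite !inE ltn_ord.
by rewrite subrr.
Qed.

Lemma walk_argmax X : exists k0, forall k, walk X k <= walk X k0.
Proof.
have [k0 _ hk0] := @arg_maxP _ _ 'I_N.+1 ord0 xpredT (fun k : 'I_N.+1 => walk X k) isT.
exists k0 => k; case: (leqP k N) => [hk | /ltnW hk].
  by apply: (hk0 (Ordinal (hk : (k < N.+1)%N))).
by rewrite (walk_ge X hk); apply: (hk0 ord_max).
Qed.

Lemma walk_argmin X : exists k0, forall k, walk X k0 <= walk X k.
Proof.
have [k0 _ hk0] := @arg_minP _ _ 'I_N.+1 ord0 xpredT (fun k : 'I_N.+1 => walk X k) isT.
exists k0 => k; case: (leqP k N) => [hk | /ltnW hk].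
  by apply: (hk0 (Ordinal (hk : (k < N.+1)%N))).
by rewrite (walk_ge X hk); apply: (hk0 ord_max).
Qed.

Lemma fmax_walk X k0 : (forall k, walk X k <= walk X k0) ->
  fmax (fA (R:=R) X) = (walk X k0)%:~R.
Proof.
move=> hk0; have ub : ubound (range (fA (R:=R) X)) (walk X k0)%:~R.
  by move=> _ [t _ <-]; rewrite fA_walk ler_int.
apply/le_anti/andP; split; first by apply: ge_sup => //; exists (fA X 0), 0.
by apply: ub_le_sup; [exists (walk X k0)%:~R | exists k0%:R; rewrite ?fA_walk_nat].
Qed.

Lemma fmin_walk X k0 : (forall k, walk X k0 <= walk X k) ->
  fmin (fA (R:=R) X) = (walk X k0)%:~R.
Proof.
move=> hk0; have lb : lbound (range (fA (R:=R) X)) (walk X k0)%:~R.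
  by move=> _ [t _ <-]; rewrite fA_walk ler_int.
apply/le_anti/andP; split; last by apply: lb_le_inf => //; exists (fA X 0), 0.
by apply: ge_inf; [exists (walk X k0)%:~R | exists k0%:R; rewrite ?fA_walk_nat].
Qed.

End Walk.

(** * Costs of partitions *)

Section PartitionCosts.
Variables (R : realType) (n : nat) (I : interval R) (w : R -> R -> \bar R).
Variable x : 'I_(2 * n) -> R.
Hypotheses (hw : well_ordering I w) (xI : forall i, x i \in I).
Local Notation N := (2 * n)%N.
Implicit Types (X Y P Q : {set 'I_N}).
Local Notation W i j := (w (x i) (x j)).
Local Open Scope ereal_scope.

Lemma W_sym i j : W i j = W j i.
Proof. by case: hw => _ sym _; apply: sym. Qed.

Lemma cost_map (s : seq 'I_N) : uniq s ->
  cost w (map x s) = \sum_(i <- s) \sum_(j <- s | j != i) W i j.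
Proof.
case: s => [|i0 s] us; first by rewrite /cost big_ord0 big_nil.
rewrite /cost size_map (big_nth i0) big_mkord; apply: eq_bigr => i _.
rewrite (big_nth i0) big_mkord; apply: eq_big => [j | j _]; last by rewrite !(nth_map i0).
by rewrite (nth_uniq i0 (ltn_ord j) (ltn_ord i) us) -val_eqE eq_sym.
Qed.

Lemma cost_sum X : cost w (xsub x X) = \sum_(i in X) \sum_(j in X | j != i) W i j.
Proof.
by rewrite /xsub cost_map ?enum_uniq // big_enum; apply: eq_bigr => i _; rewrite big_enum_cond.
Qed.

Definition cross X Y := \sum_(i in X) \sum_(j in Y) W i j.

Lemma cross_sym X Y : cross X Y = cross Y X.
Proof.
rewrite /cross exchange_big; apply: eq_bigr => i _; apply: eq_bigr => j _.
exact: W_sym.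
Qed.

Lemma cross_perml X X' Y : perm_eq (xsub x X) (xsub x X') -> cross X Y = cross X' Y.
Proof.
have crossE Z : cross Z Y = \sum_(y <- xsub x Z) \sum_(j in Y) w y (x j).
  by rewrite /cross big_map big_enum.
by move=> pe; rewrite !crossE (perm_big _ pe).
Qed.

Lemma cross_permr X Y Y' : perm_eq (xsub x Y) (xsub x Y') -> cross X Y = cross X Y'.
Proof. by move=> pe; rewrite cross_sym (cross_perml _ pe) cross_sym. Qed.

Lemma cost_setU X Y : [disjoint X & Y] ->
  cost w (xsub x (X :|: Y)) = cost w (xsub x X) + cost w (xsub x Y) + (cross X Y + cross Y X).
Proof.
move=> dXY; have split_inner (Z Z' : {set 'I_N}) : [disjoint Z & Z'] ->
    \sum_(i in Z) \sum_(j in Z :|: Z' | j != i) W i j = cost w (xsub x Z) + cross Z Z'.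
  move=> dZ; rewrite cost_sum /cross -big_split; apply: eq_bigr => i iZ.
  rewrite big_setU_disjoint //; congr (_ + _); apply: eq_bigl => j.
  by case: eqVneq => [->|]; rewrite ?andbT ?(disjointFr dZ iZ).
rewrite cost_sum -big_condT big_setU_disjoint // !big_condT split_inner // finset.setUC.
by rewrite split_inner 1?disjoint_sym //; apply: addeACA.
Qed.

Definition partition_cost X := cost w (xsub x X) + cost w (xsub x (~: X)).

Lemma partition_cost_setU X P Q (P' Q' : {set 'I_N}) : X = P :|: Q -> ~: X = P' :|: Q' ->
  [disjoint P & Q] -> [disjoint P' & Q'] ->
  partition_cost X =
    (cost w (xsub x P) + cost w (xsub x P')) + (cost w (xsub x Q) + cost w (xsub x Q'))
    + ((cross Q P + cross Q' P') + (cross Q P + cross Q' P')).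
Proof.
move=> eX eXc dPQ dPQ'; rewrite /partition_cost eXc eX !cost_setU //.
rewrite (cross_sym P) (cross_sym P').
by rewrite addeACA [X in X + _]addeACA [X in _ + X]addeACA.
Qed.

Lemma xsub_setU X Y : [disjoint X & Y] ->
  perm_eq (xsub x (X :|: Y)) (xsub x X ++ xsub x Y).
Proof.
move=> dXY; rewrite /xsub -map_cat; apply/perm_map/uniq_perm => [||j].
- exact: enum_uniq.
- rewrite cat_uniq !enum_uniq andbT /=; apply/hasPn => j.
  by rewrite !mem_enum => jY; rewrite (disjointFl dXY jY).
- by rewrite mem_cat !mem_enum finset.in_setU.
Qed.

Lemma partition_cost_neqNy X : (forall a b, a \in I -> b \in I -> w a b != -oo) ->
  partition_cost X != -oo.
Proof.
move=> w_fin; suff cost_fin Y : cost w (xsub x Y) != -oo.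
  by rewrite adde_eq_ninfty negb_or !cost_fin.
rewrite cost_sum esum_eqNy; apply/existsP => -[i /andP[_]].
by rewrite esum_eqNy => /existsP[j /andP[_]]; rewrite (negbTE (w_fin _ _ (xI i) (xI j))).
Qed.

End PartitionCosts.

(** * Peaks of f_A and the partition B(A) *)

Section Peaks.
Variables (R : realType) (n : nat) (A : {set 'I_(2 * n)}) (M : int).
Local Notation N := (2 * n)%N.
Hypotheses (hA : #|A| = n) (walk_le : forall k, walk A k <= M)
  (peak : exists k, walk A k = M) (M_gt0 : 0 < M).
Local Notation L := (Lset (R:=R) A).
Local Notation L' := (Lset_succ (R:=R) A).
Local Notation S := (L :|: L').
Local Notation B := (BA (R:=R) A).
Local Notation succ := (@ordS N).

Lemma fmax_peak : fmax (fA (R:=R) A) = M%:~R.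
Proof. by have [k0 e] := peak; rewrite -e; apply: fmax_walk => k; rewrite e. Qed.

Lemma mem_Lset j : (j \in L) = (walk A j.+1 == M).
Proof. by rewrite inE fA_walk_nat fmax_peak eqr_int. Qed.

Lemma mem_Lset_succ j : (j \in L') = (walk A j == M).
Proof.
rewrite inE fA_walk_nat fmax_peak eqr_int; case: posnP => // ->.
by rewrite walk0 (lt_eqF M_gt0).
Qed.

Lemma Lset_step j : j \in L -> j \in A /\ walk A j = M - 1.
Proof.
by rewrite mem_Lset walkS /step => /eqP; have := walk_le j; case: (j \in A); lia.
Qed.

Lemma Lset_succ_notin j : j \in L' -> j \notin A.
Proof.
rewrite mem_Lset_succ => /eqP Mj; have := walk_le j.+1.
by rewrite walkS /step Mj; case: (j \in A); lia.
Qed.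

Lemma Lset_lt j : j \in L -> (j.+1 < N)%N.
Proof.
rewrite mem_Lset ltn_neqAle ltn_ord andbT; apply: contraTneq => ->.
by rewrite walk_end // (lt_eqF M_gt0).
Qed.

Lemma val_succ j : j \in L -> val (succ j) = j.+1.
Proof. by move=> jL; rewrite /= modn_small // Lset_lt. Qed.

Lemma Lset_succE : L' = succ @: L.
Proof.
apply/setP => j; apply/idP/imsetP => [|[i iL ->]]; last first.
  by rewrite mem_Lset_succ val_succ // -mem_Lset.
rewrite mem_Lset_succ; case: j => [[|j] hj] /= Mj; first by move: Mj; rewrite walk0 (lt_eqF M_gt0).
have hj' : (j < N)%N by apply: ltnW.
exists (Ordinal hj'); first by rewrite mem_Lset.
by apply: val_inj; rewrite val_succ // mem_Lset.
Qed.

(* The summand is [walk A j.+1 == M] - [walk A j == M], so the sum telescopes. *)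
Lemma sum_peak_indicators k :
  \sum_(j < N | (j < k)%N) ((j \in L)%:R - (j \in L')%:R) = (walk A k == M)%:R :> int.
Proof.
wlog kN : k / (k <= N)%N => [hk | ].
  case: (leqP k N) => [|/ltnW Nk]; first exact: hk.
  rewrite (walk_ge A Nk) -hk //; apply: eq_bigl => j.
  by rewrite ltn_ord (leq_trans (ltn_ord j) Nk).
under eq_bigr => j _ do rewrite mem_Lset mem_Lset_succ.
pose peak_at j := (walk A j == M)%:R : int.
rewrite -(big_ord_widen _ (fun j => peak_at j.+1 - peak_at j)) //.
rewrite -(big_mkord (fun _ => true) (fun j => peak_at j.+1 - peak_at j)) telescope_sumr //.
by rewrite /peak_at walk0 (lt_eqF M_gt0) subr0.
Qed.

Lemma peak_sides j : ((j \in L) ==> (j \in A)) && ((j \in L') ==> (j \notin A)).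
Proof.
apply/andP; split; apply/implyP; [by case/Lset_step | exact: Lset_succ_notin].
Qed.

Lemma walk_BA k : walk B k = walk A k - 2 * (walk A k == M)%:R.
Proof.
rewrite -sum_peak_indicators mulr_sumr -sumrB; apply: eq_bigr => j _.
move: (peak_sides j); rewrite /step /BA finset.in_setD finset.in_setU.
by case: (j \in A); case: (j \in L); case: (j \in L').
Qed.

Lemma walk_off_peaks k :
  \sum_(j < N | (j < k)%N && (j \notin S)) step A j = walk A k - (walk A k == M)%:R.
Proof.
rewrite -sum_peak_indicators -sumrB big_mkcondr; apply: eq_bigr => j _.
move: (peak_sides j); rewrite /step finset.in_setU.
by case: (j \in A); case: (j \in L); case: (j \in L').
Qed.

Lemma osc_BA : 2 <= Osc (fA (R:=R) A) -> Osc (fA (R:=R) B) < Osc (fA (R:=R) A).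
Proof.
have [k1 hk1] := walk_argmin A.
have [kB hkB] := walk_argmax B.
have [k1B hk1B] := walk_argmin B.
rewrite /Osc fmax_peak (fmin_walk R hk1) (fmax_walk R hkB) (fmin_walk R hk1B) -!intrB.
rewrite -[2%R]/((2 : int)%:~R) ler_int ltr_int !walk_BA => osc2.
have := walk_le kB; have := walk_le k1B; have := hk1 k1B.
by do 2 case: eqP => [->|?]; rewrite ?mulr1n ?mulr0n; lia.
Qed.

Section PeakCosts.
Variables (I : interval R) (w : R -> R -> \bar R) (x : 'I_N -> R).
Hypotheses (hw : well_ordering I w) (xI : forall i, x i \in I)
  (x_mono : forall i j : 'I_N, (i <= j)%N -> x i <= x j).
Local Notation W i j := (w (x i) (x j)).
Local Notation cross := (cross w x).
Local Notation partition_cost := (partition_cost w x).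
Local Notation R0 := (A :\: S).
Local Notation R1 := (~: A :\: S).
Local Open Scope ereal_scope.

Lemma disjoint_off_peaks (Z : {set 'I_N}) : [disjoint Z :\: S & L] /\ [disjoint Z :\: S & L'].
Proof.
by split; rewrite finset.disjoints_subset; apply/fintype.subsetP => j;
  rewrite !finset.in_setD !finset.in_setU finset.in_setC => /andP[/norP[]].
Qed.

Let in_peaks := (finset.in_setU, finset.in_setD, finset.in_setC).

Lemma setA_peaks : A = R0 :|: L.
Proof.
apply/setP => j; move: (peak_sides j); rewrite !in_peaks.
by case: (j \in A); case: (j \in L); case: (j \in L').
Qed.

Lemma setCA_peaks : ~: A = R1 :|: L'.
Proof.
apply/setP => j; move: (peak_sides j); rewrite !in_peaks.
by case: (j \in A); case: (j \in L); case: (j \in L').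
Qed.

Lemma setB_peaks : B = R0 :|: L'.
Proof.
apply/setP => j; move: (peak_sides j); rewrite /BA !in_peaks.
by case: (j \in A); case: (j \in L); case: (j \in L').
Qed.

Lemma setCB_peaks : ~: B = R1 :|: L.
Proof.
apply/setP => j; move: (peak_sides j); rewrite /BA !in_peaks.
by case: (j \in A); case: (j \in L); case: (j \in L').
Qed.

Lemma xsub_A : perm_eq (xsub x A) (xsub x R0 ++ xsub x L).
Proof. by rewrite [X in xsub x X]setA_peaks; apply: xsub_setU; case: (disjoint_off_peaks A). Qed.

Lemma xsub_B : perm_eq (xsub x B) (xsub x R0 ++ xsub x L').
Proof. by rewrite [X in xsub x X]setB_peaks; apply: xsub_setU; case: (disjoint_off_peaks A). Qed.

Lemma xsub_CB : perm_eq (xsub x (~: B)) (xsub x R1 ++ xsub x L).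
Proof.
by rewrite [X in xsub x X]setCB_peaks; apply: xsub_setU; case: (disjoint_off_peaks (~: A)).
Qed.

Lemma xsub_Lset_succ : {in L, forall l, x (succ l) = x l} -> perm_eq (xsub x L') (xsub x L).
Proof.
move=> xl; have pe : perm_eq (enum L') (map succ (enum L)).
  apply: uniq_perm => [||j]; first exact: enum_uniq.
    by rewrite (map_inj_uniq (can_inj (@ordSK N))) enum_uniq.
  rewrite mem_enum Lset_succE; apply/imsetP/mapP => -[l];
    by rewrite ?mem_enum => lL ->; exists l; rewrite ?mem_enum.
rewrite /xsub (permPl (perm_map x pe)) -map_comp.
by rewrite (@eq_in_map _ _ (x \o succ) x (enum L)).1 // => l; rewrite mem_enum => /xl.
Qed.

Definition attach u v j := W (if j \in A then u else v) j.

Definition attach_cost u v := \sum_(j in ~: S) attach u v j.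

Lemma attach_costE u v : attach_cost u v = \sum_(j in R0) W u j + \sum_(j in R1) W v j.
Proof.
have eS : ~: S = R0 :|: R1.
  by apply/setP => j; rewrite !in_peaks -andb_orr orbN andbT.
have dR : [disjoint R0 & R1].
  by rewrite finset.disjoints_subset; apply/fintype.subsetP => j; rewrite !in_peaks => /andP[_ ->];
    rewrite andbF.
rewrite /attach_cost /attach eS -big_condT big_setU_disjoint // !big_condT.
by congr (_ + _); apply: eq_bigr => j; rewrite !in_peaks => /andP[_];
  [move=> -> | move=> /negbTE ->].
Qed.

Lemma cross_Lset_succ Y : cross L' Y = \sum_(l in L) \sum_(j in Y) W (succ l) j.
Proof. by rewrite /cross Lset_succE big_imset //; apply: in2W (can_inj (@ordSK N)). Qed.

Lemma cross_A : cross L R0 + cross L' R1 = \sum_(l in L) attach_cost l (succ l).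
Proof.
by rewrite cross_Lset_succ /cross -big_split; apply: eq_bigr => l _; rewrite attach_costE.
Qed.

Lemma cross_B : cross L' R0 + cross L R1 = \sum_(l in L) attach_cost (succ l) l.
Proof.
by rewrite cross_Lset_succ /cross -big_split; apply: eq_bigr => l _; rewrite attach_costE.
Qed.

Let C := (cost w (xsub x R0) + cost w (xsub x R1)) + (cost w (xsub x L) + cost w (xsub x L')).

Lemma partition_cost_A :
  partition_cost A = C + ((cross L R0 + cross L' R1) + (cross L R0 + cross L' R1)).
Proof.
by have [dA dA'] := disjoint_off_peaks A; have [dC dC'] := disjoint_off_peaks (~: A);
  exact: (partition_cost_setU hw xI setA_peaks setCA_peaks dA dC').
Qed.

Lemma partition_cost_BA :
  partition_cost B = C + ((cross L' R0 + cross L R1) + (cross L' R0 + cross L R1)).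
Proof.
have [dA dA'] := disjoint_off_peaks A; have [dC dC'] := disjoint_off_peaks (~: A).
rewrite (partition_cost_setU hw xI setB_peaks setCB_peaks dA' dC).
by rewrite [cost _ _ + cost _ (xsub x L)]addeC.
Qed.

Definition dyck_seq (l : 'I_N) :=
  [seq j <- drop l (enum 'I_N) | j \notin S] ++ [seq j <- take l (enum 'I_N) | j \notin S].

Lemma perm_dyck_seq l : perm_eq (dyck_seq l) (enum (~: S)).
Proof.
rewrite /dyck_seq perm_catC -filter_cat cat_take_drop; apply: uniq_perm => [||j].
- exact/filter_uniq/enum_uniq.
- exact: enum_uniq.
- by rewrite mem_filter !mem_enum finset.in_setC andbT.
Qed.

Lemma attach_cost_dyck_seq l u v :
  attach_cost u v = \sum_(j <- dyck_seq l) attach u v j.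
Proof. by rewrite (perm_big _ (perm_dyck_seq l)) big_enum. Qed.

Lemma excess_off_peaks k :
  excess [in A] [seq j <- take k (enum 'I_N) | j \notin S] = (walk A k - (walk A k == M)%:R)%R.
Proof. by rewrite /excess big_filter sum_take_enum_ord -walk_off_peaks. Qed.

Lemma dyck_seq_word l : l \in L -> dyck_word [in A] (dyck_seq l).
Proof.
move=> lL; apply: dyck_word_rot; rewrite -filter_cat cat_take_drop.
  rewrite -[enum 'I_N](take_size) size_enum_ord excess_off_peaks walk_end //.
  by rewrite (lt_eqF M_gt0).
move=> m; have [k ->] := take_filter_exists (fun j => j \notin S) (enum 'I_N) m.
rewrite !excess_off_peaks (Lset_step lL).2.
have -> : (M - 1 == M)%R = false by apply/eqP; lia.
by have := walk_le k; case: eqP => [-> | ?]; rewrite ?mulr1n ?mulr0n; lia.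
Qed.

Lemma dyck_seq_separated l i j : l \in L -> subseq [:: i; j] (dyck_seq l) ->
  [\/ (x i <= x j <= x l)%R, (x (succ l) <= x i <= x j)%R
    | (x j <= x l)%R && (x (succ l) <= x i)%R].
Proof.
move=> lL; have lS : l \in S by rewrite finset.in_setU lL.
have ordered s : subseq [:: i; j] s -> subseq s (enum 'I_N) -> (i < j)%N.
  by move=> ij s_enum; apply: subseq_enum_ord (subseq_trans ij s_enum).
have right_part k : k \in [seq j <- drop l (enum 'I_N) | j \notin S] -> (succ l <= k)%N.
  rewrite mem_filter mem_drop_enum_ord val_succ // => /andP[kS lk].
  by rewrite ltn_neqAle lk andbT; apply: contraNneq kS => /val_inj <-.
have left_part k : k \in [seq j <- take l (enum 'I_N) | j \notin S] -> (k <= l)%N.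
  by rewrite mem_filter mem_take_enum_ord => /andP[_ /ltnW].
have drop_enum : subseq (drop l (enum 'I_N)) (enum 'I_N).
  by rewrite -[X in subseq _ X](cat_take_drop l) suffix_subseq.
have take_enum : subseq (take l (enum 'I_N)) (enum 'I_N).
  by rewrite -[X in subseq _ X](cat_take_drop l) prefix_subseq.
case/subseq2_cat => [ij | ij | [iR jL]].
- have ij_lt := ordered _ ij (subseq_trans (filter_subseq _ _) drop_enum).
  have iR : i \in [seq j <- drop l (enum 'I_N) | j \notin S].
    by apply: (mem_subseq ij); rewrite mem_head.
  by apply: Or32; rewrite !x_mono ?right_part // ltnW.
- have ij_lt := ordered _ ij (subseq_trans (filter_subseq _ _) take_enum).
  have jL : j \in [seq j <- take l (enum 'I_N) | j \notin S].
    by apply: (mem_subseq ij); rewrite !inE eqxx orbT.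
  by apply: Or31; rewrite !x_mono ?left_part // ltnW.
- by apply: Or33; rewrite !x_mono ?left_part ?right_part.
Qed.

Lemma attach_pair_le l i j : l \in L -> subseq [:: i; j] (dyck_seq l) -> i \notin A -> j \in A ->
  attach (succ l) l i + attach (succ l) l j <= attach l (succ l) i + attach l (succ l) j.
Proof.
move=> lL ij /negbTE iA jA; rewrite /attach iA jA.
apply: exchange_le (xI _) (xI _) (xI _) (xI _) _ (dyck_seq_separated lL ij) hw.
by rewrite x_mono // val_succ.
Qed.

Lemma attach_pair_eq l i j : strictly_well_ordering I w -> l \in L -> x l != x (succ l) ->
  subseq [:: i; j] (dyck_seq l) -> i \notin A -> j \in A ->
  attach (succ l) l i + attach (succ l) l j = attach l (succ l) i + attach l (succ l) j ->
  attach (succ l) l i + attach (succ l) l j \is a fin_num -> x i = x j.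
Proof.
move=> hsw lL ne ij /negbTE iA jA; rewrite /attach iA jA fin_numE => e /andP[_ fin].
have le_l : (x l <= x (succ l))%R by rewrite x_mono // val_succ.
have [//|el] := exchange_eq (xI _) (xI _) (xI _) (xI _) le_l (dyck_seq_separated lL ij) hsw e fin.
by rewrite el eqxx in ne.
Qed.

Lemma attach_cost_le l : l \in L -> attach_cost (succ l) l <= attach_cost l (succ l).
Proof.
by move=> lL; rewrite !(attach_cost_dyck_seq l); apply: dyck_sum_le (dyck_seq_word lL) _ => i j;
  apply: attach_pair_le.
Qed.

Lemma perm_dyck_seq_filter l (Z : {set 'I_N}) :
  perm_eq [seq j <- dyck_seq l | j \in Z] (enum (Z :\: S)).
Proof.
apply: uniq_perm => [||j].
- by apply: filter_uniq; rewrite (perm_uniq (perm_dyck_seq l)) enum_uniq.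
- exact: enum_uniq.
- by rewrite mem_filter (perm_mem (perm_dyck_seq l)) !mem_enum !in_peaks andbC.
Qed.

Lemma attach_cost_eq l : strictly_well_ordering I w -> l \in L -> x l != x (succ l) ->
  attach_cost (succ l) l = attach_cost l (succ l) -> attach_cost (succ l) l \is a fin_num ->
  perm_eq (xsub x R1) (xsub x R0).
Proof.
move=> hsw lL ne; rewrite !(attach_cost_dyck_seq l) => e fin.
have := dyck_sum_eq (dyck_seq_word lL) (fun i j => @attach_pair_le l i j lL)
  (fun i j => @attach_pair_eq l i j hsw lL ne) e fin.
have -> : [seq k <- dyck_seq l | ~~ [in A] k] = [seq k <- dyck_seq l | k \in ~: A].
  by apply: eq_filter => k; rewrite finset.in_setC.
rewrite /xsub -(permPl (perm_map x (perm_dyck_seq_filter l (~: A)))).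
by rewrite -(permPr (perm_map x (perm_dyck_seq_filter l A))).
Qed.

Lemma partition_cost_BA_le : partition_cost B <= partition_cost A.
Proof.
rewrite partition_cost_A partition_cost_BA cross_A cross_B; apply: leeD2l.
by apply: leeD; apply: lee_sum => l; apply: attach_cost_le.
Qed.

Lemma partition_cost_BA_eq_diracs : strictly_well_ordering I w ->
  partition_cost B = partition_cost A -> partition_cost B \is a fin_num ->
  diracs (xsub x A) = diracs (xsub x B) \/ diracs (xsub x A) = diracs (xsub x (~: B)).
Proof.
rewrite partition_cost_A partition_cost_BA cross_A cross_B => hsw e fin.
have le_sum : \sum_(l in L) attach_cost (succ l) l <= \sum_(l in L) attach_cost l (succ l).
  by apply: lee_sum => l; apply: attach_cost_le.
have [_ eKK] := leeD_eq (lexx C) (leeD le_sum le_sum) e fin.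
move: fin; rewrite fin_numD => /andP[_ finKK].
have [eK _] := leeD_eq le_sum le_sum eKK finKK.
move: finKK; rewrite fin_numD => /andP[finK _].
have eq_l l : l \in L -> attach_cost (succ l) l = attach_cost l (succ l).
  exact: lee_sum_eq attach_cost_le eK finK l (mem_index_enum l).
have fin_l l : l \in L -> attach_cost (succ l) l \is a fin_num.
  by move/sum_fin_numP : finK; apply; rewrite mem_index_enum.
rewrite !diracs_eq !(permPl xsub_A) (permPr xsub_B) (permPr xsub_CB) perm_cat2l perm_cat2r.
case: (pselect (exists2 l, l \in L & x l != x (succ l))) => [[l lL ne] | all_eq].
  by right; rewrite perm_sym; apply: attach_cost_eq hsw lL ne (eq_l l lL) (fin_l l lL).
left; rewrite perm_sym; apply: xsub_Lset_succ => l lL.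
by case: (eqVneq (x (succ l)) (x l)) => // ne; case: all_eq; exists l; rewrite // eq_sym.
Qed.

Lemma diracs_partition_cost_BA_eq :
  diracs (xsub x A) = diracs (xsub x B) \/ diracs (xsub x A) = diracs (xsub x (~: B)) ->
  partition_cost B = partition_cost A.
Proof.
rewrite partition_cost_A partition_cost_BA !diracs_eq !(permPl xsub_A).
rewrite (permPr xsub_B) (permPr xsub_CB).
rewrite perm_cat2l perm_cat2r => -[pe | pe].
  by rewrite (cross_perml w R0 pe) (cross_perml w R1 pe).
by rewrite (cross_permr hw xI L pe) (cross_permr hw xI L' pe) [cross L' _ + _]addeC.
Qed.

End PeakCosts.

End Peaks.

Unset Implicit Arguments.

Theorem lemma3p4 (R : realType) (I : interval R) (w : R -> R -> \bar R)
  (w_fin_below : forall x y, x \in I -> y \in I -> w x y != -oo%E)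
  (hw : well_ordering I w)
  (n : nat) (A : {set 'I_(2 * n)})
  (hA : #|A| = n) (hmax : 1 <= fmax (fA (R:=R) A)) :
  (2 <= Osc (fA (R:=R) A) -> Osc (fA (R:=R) (BA (R:=R) A)) < Osc (fA (R:=R) A)) /\
  (forall x : 'I_(2 * n) -> R,
     (forall i, x i \in I) ->
     (forall i j : 'I_(2 * n), (i <= j)%N -> x i <= x j) ->
     (cost w (xsub x (BA (R:=R) A)) + cost w (xsub x (~: BA (R:=R) A))
        <= cost w (xsub x A) + cost w (xsub x (~: A)))%E /\
     (strictly_well_ordering I w ->
      (cost w (xsub x (BA (R:=R) A)) + cost w (xsub x (~: BA (R:=R) A)) < +oo)%E ->
      ((cost w (xsub x (BA (R:=R) A)) + cost w (xsub x (~: BA (R:=R) A))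
          = cost w (xsub x A) + cost w (xsub x (~: A)))%E <->
       diracs (xsub x A) = diracs (xsub x (BA (R:=R) A)) \/
       diracs (xsub x A) = diracs (xsub x (~: BA (R:=R) A))))).
Proof.
have [k0 walk_le] := walk_argmax A.
have peak : exists k, walk A k = walk A k0 by exists k0.
have M_gt0 : 0 < walk A k0.
  have : (1 : int)%:~R <= (walk A k0)%:~R :> R by rewrite -(fmax_walk R walk_le).
  by rewrite ler_int.
split; first exact: osc_BA hA walk_le peak M_gt0.
move=> x xI x_mono; split; first exact: (partition_cost_BA_le hA walk_le peak M_gt0 hw xI x_mono).
move=> hsw total_lt; split; last exact: (diracs_partition_cost_BA_eq hA walk_le peak M_gt0 hw xI).
move=> e; apply: (partition_cost_BA_eq_diracs hA walk_le peak M_gt0 hw xI x_mono hsw e).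
by rewrite fin_numE (partition_cost_neqNy xI _ w_fin_below) -ltey.
Qed.
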